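(* Let $k\ge 2$ and let $G=(V,E)$ be a $k$-quasi-planar topological graph whose edges are drawn as $x$-monotone curves, with vertices labeled $1,\dots,n$. Let $L$ be a vertical line containing no vertex, let $V_1$ (resp. $V_2$) be the set of vertices to the left (resp. right) of $L$, and let $F$ be a set of edges of $G$ each of which intersects $L$ (so each has its left endpoint in $V_1$ and right endpoint in $V_2$), such that: (i) for each $v\in V_1$, no two edges of $F$ with left endpoint $v$ cross at a point to the left of $L$; (ii) for each $w\in V_2$, no two edges of $F$ with right endpoint $w$ cross at a point to the right of $L$; (iii) the intersection points of the edges of $F$ with $L$ are pairwise distinct. Let $e_1,\dots,e_m$ be the edges of $F$ in the order in which they intersect $L$ from bottom to top, and let $S_1=p_1,\dots,p_m$ and $S_2=q_1,\dots,q_m$, where $p_i$ is the label of the left endpoint of $e_i$ and $q_i$ the label of its right endpoint. Then neither $S_1$ nor $S_2$ has a subsequence of type up-down-up$(k^3+2)$.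
   Context: A topological graph is a graph drawn in the plane so that vertices are distinct points and edges are non-self-intersecting arcs joining the corresponding points; no edge passes through a vertex other than its endpoints, any two edges meet in finitely many points, and tangencies are not allowed (shared interior points are proper crossings). It is $k$-quasi-planar if no $k$ of its edges are pairwise crossing. An edge is $x$-monotone if every vertical line meets it in at most one point. For $l\ge 2$, a sequence $s_1,\dots,s_{3l-2}$ is of type up-down-up$(l)$ if its first $l$ terms are pairwise different and $s_i=s_{2l-i}=s_{(2l-2)+i}$ for every $1\le i\le l$ (e.g. $a,b,c,d,c,b,a,b,c,d$ is of type up-down-up$(4)$). A sequence has a subsequence of this type if some (not necessarily contiguous) subsequence of it is of this type. *)

From Stdlib Require Import Reals.
From mathcomp Require Import all_boot.
Set Implicit Arguments. Unset Strict Implicit. Unset Printing Implicit Defensive.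

(* Every edge is x-monotone, hence it is the graph of a function over the
   x-interval [vx (eL e), vx (eR e)] between its left endpoint eL e and its
   right endpoint eR e. *)
Record drawing (n ne : nat) := Drawing {
  vx : 'I_n -> R;
  vy : 'I_n -> R;
  eL : 'I_ne -> 'I_n;
  eR : 'I_ne -> 'I_n;
  ef : 'I_ne -> R -> R
}.

Section Defs.
Variables (n ne : nat) (D : drawing n ne).

Definition lx (e : 'I_ne) : R := vx D (eL D e).
Definition rx (e : 'I_ne) : R := vx D (eR D e).

Definition cont_on (f : R -> R) (a b : R) : Prop :=
  forall x, (Rle (a) (x) /\ Rle (x) (b)) -> forall eps, Rlt R0 (eps) -> exists delta, Rlt R0 (delta) /\
    forall y, (Rle (a) (y) /\ Rle (y) (b)) -> Rlt (Rabs (Rminus y x)) (delta) -> Rlt (Rabs (Rminus (f y) (f x))) (eps).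

Definition cross_at (e e' : 'I_ne) (x : R) : Prop :=
  (Rlt (lx e) (x) /\ Rlt (x) (rx e)) /\ (Rlt (lx e') (x) /\ Rlt (x) (rx e')) /\ ef D e x = ef D e' x.

Definition cross (e e' : 'I_ne) : Prop := exists x, cross_at e e' x.

Definition xmono_topological : Prop :=
  (forall u v, vx D u = vx D v -> vy D u = vy D v -> u = v) /\
  (forall e, Rlt (lx e) (rx e) /\ ef D e (lx e) = vy D (eL D e) /\
             ef D e (rx e) = vy D (eR D e) /\ cont_on (ef D e) (lx e) (rx e)) /\
  (forall e e', eL D e = eL D e' -> eR D e = eR D e' -> e = e') /\
  (forall e v, (Rlt (lx e) (vx D v) /\ Rlt (vx D v) (rx e)) -> ef D e (vx D v) <> vy D v) /\
  (forall e e', e <> e' -> exists l : list R, forall x,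
     (Rle (lx e) (x) /\ Rle (x) (rx e)) -> (Rle (lx e') (x) /\ Rle (x) (rx e')) -> ef D e x = ef D e' x ->
     List.In x l) /\
  (* no tangencies: every shared interior point is a proper crossing *)
  (forall e e' x, e <> e' -> cross_at e e' x ->
     exists d, Rlt R0 (d) /\
       ((forall y, (Rlt (Rminus x d) (y) /\ Rlt (y) (x)) -> Rlt (ef D e y) (ef D e' y)) /\
        (forall y, (Rlt (x) (y) /\ Rlt (y) (Rplus x d)) -> Rlt (ef D e' y) (ef D e y)) \/
        (forall y, (Rlt (Rminus x d) (y) /\ Rlt (y) (x)) -> Rlt (ef D e' y) (ef D e y)) /\
        (forall y, (Rlt (x) (y) /\ Rlt (y) (Rplus x d)) -> Rlt (ef D e y) (ef D e' y)))).

Definition quasi_planar (k : nat) : Prop :=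
  forall S : {set 'I_ne}, #|S| = k ->
    exists e e', e \in S /\ e' \in S /\ e <> e' /\ ~ cross e e'.

End Defs.

(* sequences of type up-down-up(l): 0-based version of
   s_i = s_{2l-i} = s_{2l-2+i} for 1 <= i <= l, first l terms pairwise different *)
Definition up_down_up (l : nat) (t : seq nat) : Prop :=
  size t = 3 * l - 2 /\ uniq (take l t) /\
  forall i, 1 <= i <= l ->
    nth 0 t (i - 1) = nth 0 t (2 * l - i - 1) /\
    nth 0 t (i - 1) = nth 0 t (2 * l - 3 + i).

Definition has_udu_subseq (l : nat) (s : seq nat) : Prop :=
  exists t, subseq t s /\ up_down_up l t.

(* It suffices to treat left endpoints: reflecting the plane by x |-> -x turns
   right endpoints into left ones.  An up-down-up(k^3+2) pattern of left labels
   yields k^3 distinct vertices v_i, each the left endpoint of three edges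
   a_i < b_i < c_i of F (bottom to top on L), such that on L the a_i and the c_i
   appear in increasing order of i and the b_i in decreasing order.  If b_u and
   b_v do not cross, the one starting further right stays strictly below or
   strictly above the other up to L.  Below forces c_u and c_v to cross (c_u lies
   above b_u, hence above the start of c_v, but ends below c_v on L); above
   forces a_u and a_v to cross.  Both relations are strict orders, so by Mirsky's
   theorem, applied to each of them, k^3 > (k-1)^3 indices contain a k-chain of
   one of them, hence k pairwise crossing a- or c-edges, or k indices whose
   b-edges pairwise cross: in every case k pairwise crossing edges. *)

From Stdlib Require Import Reals Lra Classical ClassicalEpsilon.
From mathcomp Require Import all_boot zify.

Set Implicit Arguments.
Unset Strict Implicit.
Unset Printing Implicit Defensive.

Section ContinuityOnInterval.
Local Open Scope R_scope.

Lemma cont_on_sub (f : R -> R) a b a' b' :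
  a <= a' -> b' <= b -> cont_on f a b -> cont_on f a' b'.
Proof.
move=> aa' b'b fC x Hx eps eps_gt0.
have [|d [d_gt0 Hd]] := fC x _ eps eps_gt0; first lra.
exists d; split=> // y Hy; apply: Hd; lra.
Qed.

Lemma cont_on_reflect (f : R -> R) a b :
  cont_on f a b -> cont_on (fun x => f (- x)) (- b) (- a).
Proof.
move=> fC x Hx eps eps_gt0.
have [|d [d_gt0 Hd]] := fC (- x) _ eps eps_gt0; first lra.
exists d; split=> // y Hy yx; apply: Hd; first lra.
by rewrite -Rabs_Ropp; replace (- (- y - - x)) with (y - x) by ring.
Qed.

(* Stdlib's [IVT] wants continuity on all of R; clamping the argument to
   [a, b] extends a function continuous on [a, b] to one. *)
Definition clamp (a b x : R) : R := Rmax a (Rmin b x).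

Lemma clamp_id a b x : a <= x <= b -> clamp a b x = x.
Proof. rewrite /clamp /Rmax /Rmin; repeat destruct Rle_dec; lra. Qed.

Lemma clamp_in a b x : a <= b -> a <= clamp a b x <= b.
Proof. rewrite /clamp /Rmax /Rmin; repeat destruct Rle_dec; lra. Qed.

Lemma clamp_lipschitz a b x y :
  a <= b -> Rabs (clamp a b y - clamp a b x) <= Rabs (y - x).
Proof.
rewrite /clamp /Rmax /Rmin /Rabs; repeat destruct Rle_dec; repeat destruct Rcase_abs; lra.
Qed.

Lemma continuity_clamp (f : R -> R) a b :
  a <= b -> cont_on f a b -> continuity (fun x => f (clamp a b x)).
Proof.
move=> ab fC x eps /= eps_gt0.
have [d [d_gt0 Hd]] := fC _ (clamp_in x ab) eps eps_gt0.
exists d; split=> [|y [_ yx]]; first lra.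
apply: Hd; first exact: clamp_in.
exact: Rle_lt_trans (clamp_lipschitz x y ab) yx.
Qed.

Lemma cont_on_ivt (f g : R -> R) a b :
  a < b -> cont_on f a b -> cont_on g a b -> f a < g a -> g b < f b ->
  exists y, a < y < b /\ f y = g y.
Proof.
move=> ab fC gC fga gfb.
pose h x := f (clamp a b x) - g (clamp a b x).
have hC : continuity h.
  by apply: continuity_minus; apply: continuity_clamp => //; lra.
have ha : h a = f a - g a by rewrite /h clamp_id //; lra.
have hb : h b = f b - g b by rewrite /h clamp_id //; lra.
have [y [Hy hy]] := IVT h a b hC ab (ltac:(lra)) (ltac:(lra)).
have y_a : y <> a by move=> ya; rewrite ya in hy; lra.
have y_b : y <> b by move=> yb; rewrite yb in hy; lra.
exists y; split; first lra.
by move: hy; rewrite /h clamp_id //; lra.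
Qed.

End ContinuityOnInterval.

Fixpoint rpath (T : Type) (R : T -> T -> Prop) (x : T) (s : seq T) : Prop :=
  if s is y :: s' then R x y /\ rpath R y s' else True.

Definition has_clique (T : eqType) (R : T -> T -> Prop) (k : nat) : Prop :=
  exists S : seq T, size S = k /\ uniq S /\ {in S &, forall u v, u <> v -> R u v}.

Lemma has_clique_sub (T : eqType) (R R' : T -> T -> Prop) k :
  (forall u v, R u v -> R' u v) -> has_clique R k -> has_clique R' k.
Proof. by move=> RR' [S [? [? RS]]]; exists S; do 2 split=> //; move=> u v *; apply/RR'/RS. Qed.

Section StrictOrderChains.
Variables (T : eqType) (R : T -> T -> Prop).
Hypothesis R_trans : forall x y z, R x y -> R y z -> R x z.
Hypothesis R_irr : forall x, ~ R x x.

Lemma rpath_mem x s : rpath R x s -> {in s, forall y, R x y}.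
Proof.
elim: s x => [|y s IHs] x //= [Rxy ys] z; rewrite inE => /orP [/eqP ->|zs] //.
exact: R_trans Rxy (IHs _ ys _ zs).
Qed.

Lemma rpath_uniq x s : rpath R x s -> uniq (x :: s).
Proof.
elim: s x => [|y s IHs] x // xys; have [_ ys] := xys.
rewrite cons_uniq IHs // andbT; apply/negP => /(rpath_mem xys); exact: R_irr.
Qed.

Lemma rpath_total x s : rpath R x s ->
  {in x :: s &, forall u v, u <> v -> R u v \/ R v u}.
Proof.
elim: s x => [|y s IHs] x xs u v; first by rewrite !inE => /eqP -> /eqP ->.
have xR := rpath_mem xs; rewrite [u \in _]inE [v \in _]inE.
case/orP=> [/eqP ->|us] /orP [/eqP ->|vs] uv //; [left | right | ]; auto.
exact: IHs (proj2 xs) u v us vs uv.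
Qed.

End StrictOrderChains.

Lemma bounded_ex_max (P : nat -> Prop) b :
  P 0 -> (forall m, P m -> m <= b) -> exists m, P m /\ forall m', P m' -> m' <= m.
Proof.
elim: b => [|b IHb] P0 Pb; first by exists 0; split=> // m /Pb.
have [Pb1|nPb1] := classic (P b.+1); first by exists b.+1; split=> // m /Pb.
apply: IHb => // m Pm; have := Pb _ Pm; rewrite leq_eqVlt => /orP [/eqP Em|//].
by rewrite Em in Pm.
Qed.

(* Mirsky: the length of a longest chain below v is a strictly monotone height. *)
Lemma long_chain_or_height (T : eqType) (R : T -> T -> Prop) k :
  (forall x y z, R x y -> R y z -> R x z) -> (forall x, ~ R x x) -> 0 < k ->
  has_clique (fun u v => R u v \/ R v u) k \/
  exists h : T -> 'I_k.-1, forall u v, R u v -> h u < h v.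
Proof.
move=> R_trans R_irr k_gt0; pose below := rpath (fun x y => R y x).
have below_trans x y z : R y x -> R z y -> R z x by move=> *; apply: R_trans; eauto.
have [[v [s [ks vs]]]|short] := classic (exists v s, k.-1 <= size s /\ below v s).
  left; exists (take k (v :: s)); split.
    by rewrite size_takel //= -(prednK k_gt0) ltnS.
  split; first exact/take_uniq/(rpath_uniq below_trans).
  move=> u w /mem_take u_s /mem_take w_s uw.
  by case: (rpath_total below_trans vs u_s w_s uw); tauto.
right.
have below_size v s : below v s -> size s < k.-1.
  by move=> vs; rewrite ltnNge; apply/negP => ks; apply: short; exists v, s.
have height v : exists m, (exists s, size s = m /\ below v s) /\
    forall m', (exists s, size s = m' /\ below v s) -> m' <= m.
  apply: (@bounded_ex_max _ k.-1); first by exists [::].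
  by move=> m [s [<- vs]]; exact/ltnW/(below_size v).
pose hv v := proj1_sig (constructive_indefinite_description _ (height v)).
have hv_spec v : (exists s, size s = hv v /\ below v s) /\
    forall m', (exists s, size s = m' /\ below v s) -> m' <= hv v.
  exact: proj2_sig (constructive_indefinite_description _ (height v)).
have hv_lt v : hv v < k.-1 by have [[s [<- vs]] _] := hv_spec v; exact: below_size vs.
exists (fun v => Ordinal (hv_lt v)) => u v Ruv /=.
have [[s [<- us]] _] := hv_spec u; have [_ vmax] := hv_spec v.
by apply: (vmax (size s).+1); exists (u :: s).
Qed.

Lemma pigeonhole_fiber (T U : finType) (f : T -> U) m : #|U| * m < #|T| ->
  exists u, m < #|[set x | f x == u]|.
Proof.
move=> card_lt; apply: NNPP => small_fibers.
have fiber_le u : #|[set x | f x == u]| <= m.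
  by rewrite leqNgt; apply/negP => ltm; apply: small_fibers; exists u.
move: card_lt; rewrite ltnNge => /negP; apply.
rewrite -sum1_card (partition_big f xpredT) //=.
apply: leq_trans (_ : \sum_(u : U) m <= _); last by rewrite sum_nat_const cardE.
by apply: leq_sum => u _; rewrite sum1dep_card; exact: fiber_le.
Qed.

Section TwoOrdersAndARelation.
Variables (T : finType) (A B C : T -> T -> Prop).
Hypotheses (A_trans : forall x y z, A x y -> A y z -> A x z) (A_irr : forall x, ~ A x x).
Hypotheses (B_trans : forall x y z, B x y -> B y z -> B x z) (B_irr : forall x, ~ B x x).
Hypothesis ABC_cover : forall u v, u <> v -> [\/ A u v \/ A v u, B u v \/ B v u | C u v].

Lemma chain_chain_or_clique k : 0 < k -> k.-1 ^ 3 < #|T| ->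
  [\/ has_clique (fun u v => A u v \/ A v u) k,
      has_clique (fun u v => B u v \/ B v u) k | has_clique C k].
Proof.
move=> k_gt0 card_T.
have [chainA|[hA hA_mono]] := long_chain_or_height A_trans A_irr k_gt0.
  by constructor 1.
have [chainB|[hB hB_mono]] := long_chain_or_height B_trans B_irr k_gt0.
  by constructor 2.
constructor 3; pose h v := (hA v, hB v).
have [w fiber_w] : exists w, k.-1 < #|[set x | h x == w]|.
  apply: pigeonhole_fiber; move: card_T.
  by rewrite card_prod !card_ord !expnS expn0 muln1 mulnA.
exists (take k (enum [set x | h x == w])); split.
  by rewrite size_takel // -cardE; move: fiber_w; rewrite prednK.
split; first exact/take_uniq/enum_uniq.
move=> u v /mem_take; rewrite mem_enum inE => /eqP hu /mem_take.
rewrite mem_enum inE => /eqP hv uv.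
have [EA EB] : hA u = hA v /\ hB u = hB v by move: hu; rewrite -hv => -[-> ->].
by case: (ABC_cover uv) => [[/hA_mono|/hA_mono]|[/hB_mono|/hB_mono]|//];
  rewrite ?EA ?EB ltnn.
Qed.

End TwoOrdersAndARelation.

Section UpDownUpTriples.
Variables (T : eqType) (r : T -> T -> Prop).

Definition ordered_by (s : seq T) : Prop :=
  forall x0 i j, i < j < size s -> r (nth x0 s i) (nth x0 s j).

Lemma ordered_by_subseq s1 s2 : subseq s1 s2 -> ordered_by s2 -> ordered_by s1.
Proof.
move=> s12 ord2 x0 i j /andP [ij js1].
pose rb x y := if excluded_middle_informative (r x y) then true else false.
have rbP x y : reflect (r x y) (rb x y).
  by rewrite /rb; case: excluded_middle_informative => ?; constructor.
have pw2 : pairwise rb s2.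
  by apply/(pairwiseP x0) => a b a2 b2 ab; apply/rbP/ord2; rewrite ab.
have /(pairwiseP x0) pw1 := subseq_pairwise s12 pw2.
by apply/rbP/pw1 => //; apply: ltn_trans js1.
Qed.

Variable f : T -> nat.

Definition triple_family (s : seq T) N (E1 E2 E3 : 'I_N -> T) : Prop :=
  [/\ forall i, [/\ E1 i \in s, E2 i \in s & E3 i \in s],
      forall i, f (E2 i) = f (E1 i) /\ f (E3 i) = f (E1 i),
      injective (fun i => f (E1 i)),
      forall i, r (E1 i) (E2 i) /\ r (E2 i) (E3 i) &
      forall i j : 'I_N, i < j -> [/\ r (E1 i) (E1 j), r (E2 j) (E2 i) & r (E3 i) (E3 j)]].

Lemma up_down_up_triples s N : ordered_by s -> up_down_up (N + 2) (map f s) ->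
  exists E1 E2 E3 : 'I_N -> T, triple_family s E1 E2 E3.
Proof.
move=> ord [size_s [uniq_head labels]].
have x0 : T by case: s ord size_s uniq_head labels => [_ /= ?|x *]; [lia | exact: x].
rewrite size_map in size_s.
(* 0-based positions of the three occurrences of the (i+2)-nd letter of the
   pattern; the first and last letters are dropped since two of their three
   occurrences coincide. *)
pose p1 (i : 'I_N) := i.+1.
pose p2 (i : 'I_N) := 2 * N + 1 - i.
pose p3 (i : 'I_N) := 2 * N + 3 + i.
have p_lt i : [/\ p1 i < p2 i, p2 i < p3 i & p3 i < size s].
  by have := ltn_ord i; rewrite /p1 /p2 /p3 size_s; split; lia.
have p_mono (i j : 'I_N) : i < j -> [/\ p1 i < p1 j, p2 j < p2 i & p3 i < p3 j].
  by have := ltn_ord j; rewrite /p1 /p2 /p3; split; lia.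
have ord_at p q : p < q -> q < size s -> r (nth x0 s p) (nth x0 s q).
  by move=> pq qs; apply: ord; rewrite pq.
exists (fun i => nth x0 s (p1 i)), (fun i => nth x0 s (p2 i)), (fun i => nth x0 s (p3 i)).
have lab p : p < size s -> nth 0 (map f s) p = f (nth x0 s p) by move=> ?; rewrite (nth_map x0).
split.
- by move=> i; have [? ? ?] := p_lt i; split; apply: mem_nth; lia.
- move=> i; have [lt12 lt23 lt3s] := p_lt i.
  have [|L12 L13] := labels i.+2; first by have := ltn_ord i; lia.
  rewrite (_ : i.+2 - 1 = p1 i) // in L12 L13.
  rewrite (_ : 2 * (N + 2) - i.+2 - 1 = p2 i) in L12; last by rewrite /p2; lia.
  rewrite (_ : 2 * (N + 2) - 3 + i.+2 = p3 i) in L13; last by rewrite /p3; lia.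
  by rewrite -!lab ?L12 ?L13 //; lia.
- move=> i j /= Eij; apply/ord_inj/eq_add_S.
  have i_lt := ltn_ord i; have j_lt := ltn_ord j.
  have size_head : size (take (N + 2) (map f s)) = N + 2.
    by rewrite size_takel // size_map size_s; lia.
  apply/eqP; rewrite -(nth_uniq 0 _ _ uniq_head) ?size_head; try lia.
  by rewrite !nth_take ?lab ?size_s ?Eij; try lia.
- by move=> i; have [? ? ?] := p_lt i; split; apply: ord_at; lia.
- move=> i j ij; have [? ? ?] := p_mono i j ij; have [? ? ?] := p_lt i; have [? ? ?] := p_lt j.
  by split; apply: ord_at; lia.
Qed.

Lemma has_udu_subseq_triples s N : ordered_by s -> has_udu_subseq (N + 2) (map f s) ->
  exists E1 E2 E3 : 'I_N -> T, triple_family s E1 E2 E3.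
Proof.
move=> ord [t [/subseqP [m _ ->] udu]]; rewrite -map_mask in udu.
have [|E1 [E2 [E3 [E_in ? ? ? ?]]]] := up_down_up_triples _ udu.
  exact: ordered_by_subseq (mask_subseq m s) ord.
exists E1, E2, E3; split=> // i.
by have [? ? ?] := E_in i; split; apply: (mem_mask (m := m)).
Qed.

End UpDownUpTriples.

Lemma clique_image (T U : finType) (E : T -> U) (R : U -> U -> Prop) k :
  injective E -> has_clique (fun u v => R (E u) (E v)) k ->
  exists S : {set U}, #|S| = k /\ {in S &, forall e e', e <> e' -> R e e'}.
Proof.
move=> Einj [S [sizeS [uniqS RS]]]; exists (E @: [set x in S]); split.
  by rewrite card_imset // cardsE; move/card_uniqP: uniqS => ->.
move=> _ _ /imsetP [u + ->] /imsetP [v + ->]; rewrite !inE => uS vS Euv.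
by apply: RS => // uv; apply: Euv; rewrite uv.
Qed.

Section OneSidedFan.
Local Open Scope R_scope.
Variables (n ne : nat) (px py : 'I_n -> R) (ep : 'I_ne -> 'I_n) (g : 'I_ne -> R -> R)
  (c : R) (F : {set 'I_ne}) (X : 'I_ne -> 'I_ne -> Prop).
Local Notation sx e := (px (ep e)).

Hypothesis vertex_inj : forall u v, px u = px v -> py u = py v -> u = v.
Hypothesis start_lt : forall e, e \in F -> sx e < c.
Hypothesis g_start : forall e, e \in F -> g e (sx e) = py (ep e).
Hypothesis g_cont : forall e, e \in F -> cont_on (g e) (sx e) c.
Hypothesis avoid_vertex : forall e v, e \in F -> sx e < px v < c -> g e (px v) <> py v.
Hypothesis fan_disjoint : forall e e' y, e \in F -> e' \in F -> e <> e' -> ep e = ep e' ->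
  sx e < y < c -> g e y <> g e' y.
Hypothesis meet_X : forall e e' y, e \in F -> e' \in F -> sx e < y -> sx e' < y -> y < c ->
  g e y = g e' y -> X e e'.

Lemma meet_of_order_swap e e' x : e \in F -> e' \in F -> sx e <= x -> sx e' <= x -> x < c ->
  g e x < g e' x -> g e' c < g e c -> exists y, x < y < c /\ g e y = g e' y.
Proof.
move=> eF e'F ex e'x xc lt_x gt_c.
by apply: cont_on_ivt => //; apply: cont_on_sub (g_cont _) => //; lra.
Qed.

Lemma X_of_order_swap e e' x : e \in F -> e' \in F -> sx e <= x -> sx e' <= x -> x < c ->
  g e x < g e' x -> g e' c < g e c -> X e e' /\ X e' e.
Proof.
move=> eF e'F ex e'x xc lt_x gt_c.
have [y [xyc gy]] := meet_of_order_swap eF e'F ex e'x xc lt_x gt_c.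
by split; apply: (meet_X (y := y)) => //; lra.
Qed.

Lemma fan_le e e' x : e \in F -> e' \in F -> ep e = ep e' -> g e c < g e' c ->
  sx e <= x <= c -> g e x <= g e' x.
Proof.
move=> eF e'F ee' lt_c ex; apply: Rnot_lt_le => gt_x.
have ne_ee' : e <> e' by move=> E; rewrite E in lt_c; lra.
have xc : x < c by case: ex => _ [//|E]; rewrite E in gt_x; lra.
have sx_x : sx e < x.
  have start_eq : g e (sx e) = g e' (sx e) by rewrite g_start // ee' g_start.
  have [//|E] := Rle_lt_or_eq_dec _ _ (proj1 ex).
  by rewrite -E start_eq in gt_x; lra.
have e'x : sx e' <= x by rewrite -ee'; lra.
have [y [xyc gy]] := meet_of_order_swap e'F eF e'x (Rlt_le _ _ sx_x) xc gt_x lt_c.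
apply: (fan_disjoint eF e'F ne_ee' ee' _ (esym gy)); lra.
Qed.

Lemma lt_up_to_c e e' x0 : e \in F -> e' \in F -> sx e <= x0 -> sx e' <= x0 ->
  (forall x, x0 <= x < c -> g e x <> g e' x) -> g e c < g e' c ->
  forall x, x0 <= x <= c -> g e x < g e' x.
Proof.
move=> eF e'F ex0 e'x0 apart lt_c x [x0x xc].
have [{}xc|->] := Rle_lt_or_eq_dec _ _ xc; last by [].
have [lt_x|[eq_x|gt_x]] := Rtotal_order (g e x) (g e' x) => //.
  by case: (apart x (conj x0x xc) eq_x).
have [y [xyc gy]] := meet_of_order_swap (x := x) e'F eF (ltac:(lra)) (ltac:(lra)) xc gt_x lt_c.
by case: (apart y (ltac:(lra)) (esym gy)).
Qed.

Variable k : nat.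
Hypothesis k_gt0 : (0 < k)%N.
Hypothesis no_X_k_clique : forall S : {set 'I_ne}, #|S| = k ->
  exists e e', e \in S /\ e' \in S /\ e <> e' /\ ~ X e e'.

Section Triples.
Variables (N : nat) (E1 E2 E3 : 'I_N -> 'I_ne).
Hypothesis E_in_F : forall i, [/\ E1 i \in F, E2 i \in F & E3 i \in F].
Hypothesis E_ep : forall i, ep (E2 i) = ep (E1 i) /\ ep (E3 i) = ep (E1 i).
Hypothesis E_ep_inj : injective (fun i => ep (E1 i)).
Hypothesis E_lt_c : forall i, g (E1 i) c < g (E2 i) c /\ g (E2 i) c < g (E3 i) c.
Hypothesis E_mono_c : forall i j : 'I_N, (i < j)%N ->
  [/\ g (E1 i) c < g (E1 j) c, g (E2 j) c < g (E2 i) c & g (E3 i) c < g (E3 j) c].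

Local Notation xv i := (sx (E1 i)).

Lemma E_start i : [/\ sx (E2 i) = xv i, sx (E3 i) = xv i,
  g (E1 i) (xv i) = py (ep (E1 i)), g (E2 i) (xv i) = py (ep (E1 i))
  & g (E3 i) (xv i) = py (ep (E1 i))].
Proof.
have [e1F e2F e3F] := E_in_F i; have [ep2 ep3] := E_ep i.
split; rewrite ?ep2 ?ep3 ?g_start //.
  by rewrite -[in LHS]ep2 -ep2 g_start.
by rewrite -[in LHS]ep3 -ep3 g_start.
Qed.

Definition over (u v : 'I_N) : Prop :=
  xv u <= xv v /\ forall x, xv v <= x <= c -> g (E2 v) x < g (E2 u) x.
Definition under (u v : 'I_N) : Prop :=
  xv u <= xv v /\ forall x, xv v <= x <= c -> g (E2 u) x < g (E2 v) x.

Lemma over_lt u v : over u v -> (u < v)%N.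
Proof.
move=> [_ below]; have := below c; have [e1F _ _] := E_in_F v.
have := start_lt e1F; case: (ltngtP u v) => [//|vu|/val_inj ->] vc; last lra.
by have [_ ? _] := E_mono_c vu; lra.
Qed.

Lemma under_gt u v : under u v -> (v < u)%N.
Proof.
move=> [_ above]; have := above c; have [e1F _ _] := E_in_F v.
have := start_lt e1F; case: (ltngtP u v) => [uv|//|/val_inj ->] vc; last lra.
by have [_ ? _] := E_mono_c uv; lra.
Qed.

Lemma over_irr u : ~ over u u.
Proof. by move/over_lt; rewrite ltnn. Qed.

Lemma under_irr u : ~ under u u.
Proof. by move/under_gt; rewrite ltnn. Qed.

Lemma over_trans u v w : over u v -> over v w -> over u w.
Proof.
move=> [uv Huv] [vw Hvw]; split=> [|x xw]; first lra.
by have := Hvw x xw; have := Huv x (ltac:(lra)); lra.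
Qed.

Lemma under_trans u v w : under u v -> under v w -> under u w.
Proof.
move=> [uv Huv] [vw Hvw]; split=> [|x xw]; first lra.
by have := Hvw x xw; have := Huv x (ltac:(lra)); lra.
Qed.

Lemma E2_apart_at_start u v : u <> v -> xv u <= xv v ->
  g (E2 u) (xv v) <> g (E2 v) (xv v).
Proof.
move=> uv le_uv; have [_ e2uF _] := E_in_F u; have [e1vF _ _] := E_in_F v.
have [s2u _ _ g2u _] := E_start u; have [_ _ _ g2v _] := E_start v.
rewrite g2v; have [lt_uv|eq_uv] := Rle_lt_or_eq_dec _ _ le_uv.
  by apply: avoid_vertex; rewrite ?s2u //; split=> //; apply: start_lt.
by move=> E; apply/uv/E_ep_inj/vertex_inj; rewrite // -g2u -E eq_uv.
Qed.

Lemma over_or_under u v : u <> v -> xv u <= xv v ->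
  (forall y, xv v < y < c -> g (E2 u) y <> g (E2 v) y) -> over u v \/ under u v.
Proof.
move=> uv le_uv apart.
have [_ e2uF _] := E_in_F u; have [_ e2vF _] := E_in_F v.
have [s2u _ _ _ _] := E_start u; have [s2v _ _ _ _] := E_start v.
have apart' x : xv v <= x < c -> g (E2 u) x <> g (E2 v) x.
  move=> [vx xc]; have [{}vx|<-] := Rle_lt_or_eq_dec _ _ vx; first exact: apart.
  exact: E2_apart_at_start.
have [uv'|vu'|/val_inj //] := ltngtP u v.
- left; split=> //; apply: (lt_up_to_c e2vF e2uF); rewrite ?s2u ?s2v; try lra.
    by move=> x /apart' /nesym.
  by have [_ ? _] := E_mono_c uv'.
- right; split=> //; apply: (lt_up_to_c e2uF e2vF _ _ apart'); rewrite ?s2u ?s2v; try lra.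
  by have [_ ? _] := E_mono_c vu'.
Qed.

(* The outer edge of [u] lies above its middle edge, hence above the start of
   the outer edge of [v], yet ends below it on the line. *)
Lemma over_X3 u v : over u v -> X (E3 u) (E3 v) /\ X (E3 v) (E3 u).
Proof.
move=> uv; have lt_uv := over_lt uv; case: uv => le_uv below.
have [_ e2uF e3uF] := E_in_F u; have [e1vF _ e3vF] := E_in_F v.
have [s2u s3u _ _ _] := E_start u; have [_ s3v _ g2v g3v] := E_start v.
have vc := start_lt e1vF.
have mid_le : g (E2 u) (xv v) <= g (E3 u) (xv v).
  apply: fan_le; rewrite ?s2u //; last lra.
    by have [-> ->] := E_ep u.
  by have [_ ?] := E_lt_c u.
have [_ _ ?] := E_mono_c lt_uv.
have := below (xv v) (ltac:(lra)); rewrite g2v => ?.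
apply/and_comm; apply: (X_of_order_swap (x := xv v)); rewrite ?s3u ?s3v ?g3v //; lra.
Qed.

Lemma under_X1 u v : under u v -> X (E1 u) (E1 v) /\ X (E1 v) (E1 u).
Proof.
move=> uv; have lt_vu := under_gt uv; case: uv => le_uv above.
have [e1uF e2uF _] := E_in_F u; have [e1vF _ _] := E_in_F v.
have [s2u _ _ _ _] := E_start u; have [_ _ g1v g2v _] := E_start v.
have vc := start_lt e1vF.
have mid_ge : g (E1 u) (xv v) <= g (E2 u) (xv v).
  apply: fan_le => //; last lra.
    by have [-> _] := E_ep u.
  by have [? _] := E_lt_c u.
have [? _ _] := E_mono_c lt_vu.
have := above (xv v) (ltac:(lra)); rewrite g2v => ?.
by apply: (X_of_order_swap (x := xv v)); rewrite ?g1v //; lra.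
Qed.

Lemma over_under_or_X2 u v : u <> v ->
  [\/ over u v \/ over v u, under u v \/ under v u | X (E2 u) (E2 v)].
Proof.
move=> uv; have [X2|noX2] := classic (X (E2 u) (E2 v)); first by constructor 3.
have [_ e2uF _] := E_in_F u; have [_ e2vF _] := E_in_F v.
have [s2u _ _ _ _] := E_start u; have [s2v _ _ _ _] := E_start v.
have [le_uv|lt_vu] := Rle_lt_dec (xv u) (xv v).
  have [|?|?] := over_or_under uv le_uv; [|by constructor 1; left|by constructor 2; left].
  by move=> y yc gy; apply/noX2/(meet_X (y := y)); rewrite ?s2u ?s2v //; lra.
have [|?|?] := over_or_under (nesym uv) (Rlt_le _ _ lt_vu);
  [|by constructor 1; right|by constructor 2; right].
by move=> y yc gy; apply/noX2/(meet_X (y := y)); rewrite ?s2u ?s2v //; lra.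
Qed.

Lemma no_large_triple_family : (k.-1 ^ 3 < N)%N -> False.
Proof.
move=> N_big.
have E_inj (E : 'I_N -> 'I_ne) : (forall i, ep (E i) = ep (E1 i)) -> injective E.
  by move=> epE i j Eij; apply: E_ep_inj; rewrite /= -!epE Eij.
have no_X_clique (E : 'I_N -> 'I_ne) : injective E ->
    ~ has_clique (fun u v => X (E u) (E v)) k.
  move=> Einj /(clique_image Einj) [S [cardS XS]].
  by have [e [e' [eS [e'S [ee' nX]]]]] := no_X_k_clique cardS; apply/nX/XS.
have [cl|cl|cl] := chain_chain_or_clique over_trans over_irr under_trans under_irr
  over_under_or_X2 k_gt0 (ltac:(by rewrite card_ord)).
- apply: (no_X_clique E3 (E_inj _ (fun i => proj2 (E_ep i)))).
  by apply: has_clique_sub cl => u v [/over_X3 []|/over_X3 []].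
- apply: (no_X_clique E1 (E_inj _ (fun=> erefl))).
  by apply: has_clique_sub cl => u v [/under_X1 []|/under_X1 []].
- exact: (no_X_clique E2 (E_inj _ (fun i => proj1 (E_ep i)))).
Qed.

End Triples.

Lemma fan_labels_no_udu (s : seq 'I_ne) :
  {subset s <= F} -> ordered_by (fun e e' => g e c < g e' c) s ->
  ~ has_udu_subseq (k ^ 3 + 2) [seq nat_of_ord (ep e) | e <- s].
Proof.
move=> sF ord udu.
have [E1 [E2 [E3 [E_in E_lab E_inj E_lt E_mono]]]] := has_udu_subseq_triples ord udu.
apply: (@no_large_triple_family _ E1 E2 E3) => //.
- by move=> i; have [? ? ?] := E_in i; split; apply: sF.
- by move=> i; have [? ?] := E_lab i; split; apply: val_inj.
- by move=> i j /= Eij; apply: E_inj; rewrite /= Eij.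
- by rewrite ltn_exp2r // prednK.
Qed.

End OneSidedFan.

Section Drawing.
Local Open Scope R_scope.
Variables (k n ne : nat) (D : drawing n ne) (c : R) (F : {set 'I_ne}) (s : seq 'I_ne).
Hypothesis k_gt0 : (0 < k)%N.
Hypothesis D_xmono : xmono_topological D.
Hypothesis D_qp : quasi_planar D k.
Hypothesis F_cross_L : forall e, e \in F -> lx D e < c < rx D e.
Hypothesis s_F : {subset s <= F}.
Hypothesis s_ordered : ordered_by (fun e e' => ef D e c < ef D e' c) s.

Lemma left_labels_no_udu :
  (forall e e' x, e \in F -> e' \in F -> e <> e' -> eL D e = eL D e' ->
     x < c -> ~ cross_at D e e' x) ->
  ~ has_udu_subseq (k ^ 3 + 2) [seq nat_of_ord (eL D e) | e <- s].
Proof.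
move: D_xmono => [vertex_inj [edge [_ [avoid _]]]] left_fan.
have bounds e : e \in F -> lx D e < c < rx D e /\ lx D e < rx D e.
  by move=> eF; have [? _] := edge e; split=> //; exact: F_cross_L.
apply: (fan_labels_no_udu (px := vx D) (py := vy D) (ep := eL D) (g := ef D) (c := c) (F := F)
    (X := cross D)) => //.
- by move=> e /bounds; rewrite /lx => ?; lra.
- by move=> e _; have [_ [-> _]] := edge e.
- move=> e /bounds eF; have [_ [_ [_ eC]]] := edge e.
  by apply: cont_on_sub eC; rewrite /lx /rx in eF *; lra.
- by move=> e v /bounds eF vx; apply: avoid; rewrite /lx /rx in eF *; lra.
- move=> e e' y eF e'F ee' same y_lt gy; apply: (left_fan e e' y) => //; first lra.
  have := bounds _ eF; have := bounds _ e'F; rewrite /cross_at /lx /rx -same.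
  by move=> *; do 2 split=> //; lra.
- move=> e e' y /bounds eF /bounds e'F ey e'y yc gy; exists y.
  by rewrite /cross_at /lx /rx in eF e'F *; do 2 split=> //; lra.
Qed.

Lemma right_labels_no_udu :
  (forall e e' x, e \in F -> e' \in F -> e <> e' -> eR D e = eR D e' ->
     c < x -> ~ cross_at D e e' x) ->
  ~ has_udu_subseq (k ^ 3 + 2) [seq nat_of_ord (eR D e) | e <- s].
Proof.
move: D_xmono => [vertex_inj [edge [_ [avoid _]]]] right_fan.
have bounds e : e \in F -> lx D e < c < rx D e /\ lx D e < rx D e.
  by move=> eF; have [? _] := edge e; split=> //; exact: F_cross_L.
apply: (fan_labels_no_udu (px := fun v => - vx D v) (py := vy D) (ep := eR D)
  (g := fun e x => ef D e (- x)) (c := - c) (F := F) (X := cross D)) => //.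
- by move=> u v /Ropp_eq_reg; apply: vertex_inj.
- by move=> e /bounds; rewrite /rx => ?; lra.
- by move=> e _; rewrite Ropp_involutive; have [_ [_ [-> _]]] := edge e.
- move=> e /bounds eF; have [_ [_ [_ /cont_on_reflect eC]]] := edge e.
  by apply: cont_on_sub eC; rewrite /lx /rx in eF *; lra.
- move=> e v /bounds eF vx; rewrite Ropp_involutive; apply: avoid.
  by rewrite /lx /rx in eF *; lra.
- move=> e e' y eF e'F ee' same y_lt gy; apply: (right_fan e e' (- y)) => //; first lra.
  have := bounds _ eF; have := bounds _ e'F; rewrite /cross_at /lx /rx -same.
  by move=> *; do 2 split=> //; lra.
- move=> e e' y /bounds eF /bounds e'F ey e'y yc gy; exists (- y).
  by rewrite /cross_at /lx /rx in eF e'F *; do 2 split=> //; lra.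
- by move=> e0 i j ij; rewrite Ropp_involutive; apply: s_ordered.
Qed.

End Drawing.

Theorem lemma10 (k n ne : nat) (D : drawing n ne) (c : R) (F : {set 'I_ne})
  (s : seq 'I_ne) :
  2 <= k ->
  xmono_topological D ->
  quasi_planar D k ->
  (forall v, vx D v <> c) ->
  (forall e, e \in F -> (Rlt (lx D e) (c) /\ Rlt (c) (rx D e))) ->
  (forall e e' x, e \in F -> e' \in F -> e <> e' -> eL D e = eL D e' ->
     Rlt (x) (c) -> ~ cross_at D e e' x) ->
  (forall e e' x, e \in F -> e' \in F -> e <> e' -> eR D e = eR D e' ->
     Rlt (c) (x) -> ~ cross_at D e e' x) ->
  (forall e e', e \in F -> e' \in F -> e <> e' -> ef D e c <> ef D e' c) ->
  uniq s -> (forall e, (e \in s) = (e \in F)) ->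
  (forall (e0 : 'I_ne) i j, i < j < size s ->
     Rlt (ef D (nth e0 s i) c) (ef D (nth e0 s j) c)) ->
  ~ has_udu_subseq (k ^ 3 + 2) [seq nat_of_ord (eL D e) | e <- s] /\
  ~ has_udu_subseq (k ^ 3 + 2) [seq nat_of_ord (eR D e) | e <- s].
Proof.
move=> k_ge2 D_xmono D_qp _ F_L left_fan right_fan _ _ s_F s_ordered.
have k_gt0 : 0 < k by apply: leq_trans k_ge2.
have sF : {subset s <= F} by move=> e; rewrite s_F.
have := left_labels_no_udu k_gt0 D_xmono D_qp F_L sF s_ordered.
have := right_labels_no_udu k_gt0 D_xmono D_qp F_L sF s_ordered.
by move=> right left; split; [apply: left | apply: right].
Qed.
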